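(* Let $D$ be a Ferrers diagram with $n$ rows and $n$ columns, i.e. $D = \{(a,b) : 1 \le a \le n,\ 1 \le b \le \lambda_a\}$ for integers $n = \lambda_1 \ge \lambda_2 \ge \cdots \ge \lambda_n \ge 1$. Let $G$ be its Ferrers graph: the bipartite graph with row-vertices $1,\dots,n$ and column-vertices $1,\dots,n$, row $a$ adjacent to column $b$ if and only if $(a,b) \in D$. Every Hamiltonian path of $G$ has one end a row-vertex and the other a column-vertex; write it, starting from its row end, as $a_1, b_1, a_2, b_2, \dots, a_n, b_n$ (the $a_i$ rows, the $b_i$ columns). An $n$-rook placement on $D$ is a set of $n$ boxes of $D$, no two in the same row or column. Define a map $\Phi$ on Hamiltonian paths of $G$ as follows. Set $b_0 := 1$ and start with two empty sets $A$, $B$ of boxes. For $i = 1, \dots, n$ in turn: if no box of $A$ lies in column $b_{i-1}$, add the box $(a_i, b_{i-1})$ to $A$; otherwise add to $A$ the box $(a_i, c)$, where $c$ is the smallest column index greater than $b_{i-1}$ such that no box of $A$ lies in column $c$; then add the box $(a_i, b_i)$ to $B$. Set $\Phi(\text{path}) = (A, B)$. Then $\Phi$ is well defined (in particular the column $c$ always exists and every box added to $A$ lies in $D$), and $\Phi$ is a bijection from the set of Hamiltonian paths of $G$ onto the set of ordered pairs $(A,B)$ of $n$-rook placements on $D$. Consequently the number of Hamiltonian paths of $G$ equals the square of the number of $n$-rook placements on $D$.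
   Context: Boxes are indexed as $(a,b)$ = (row, column). Hamiltonian paths are regarded as undirected paths through all $2n$ vertices; each is recorded uniquely as the vertex sequence starting from its row-vertex end. *)

(* Rows and columns are 0-indexed as 'I_n
   (row/column a+1 of the paper is the ordinal a). *)
From mathcomp Require Import all_boot all_order.
Set Implicit Arguments. Unset Strict Implicit. Unset Printing Implicit Defensive.

Section Ferrers.
Variables (n : nat) (lam : 'I_n -> nat).

Definition box := ('I_n * 'I_n)%type.

Definition ferrersD : {set box} := [set x : box | x.2 < lam x.1].

(* Vertices of the Ferrers graph: inl a = row vertex a, inr b = column vertex b. *)
Definition vertex := ('I_n + 'I_n)%type.

Definition is_row (v : vertex) : bool := if v is inl _ then true else false.

Definition fadj (u v : vertex) : bool :=
  match u, v with
  | inl a, inr b => (a, b) \in ferrersD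
  | inr b, inl a => (a, b) \in ferrersD
  | _, _ => false
  end.

(* A vertex sequence traversing a Hamiltonian path of the Ferrers graph:
   it visits every one of the 2n vertices exactly once, consecutive vertices
   being adjacent. (An undirected path corresponds to such a sequence up to
   reversal.) *)
Definition hamseq (s : seq vertex) : bool :=
  [&& size s == #|{: vertex}|, uniq s &
      if s is x :: t then path fadj x t else true].

Definition interleave (p : seq box) : seq vertex :=
  flatten [seq [:: inl x.1; inr x.2] | x <- p].

(* Hamiltonian paths, recorded from their row-vertex end as
   a_1 b_1 ... a_n b_n, encoded by the n-tuple of pairs (a_i, b_i). *)
Definition hamPaths : {set n.-tuple box} :=
  [set p : n.-tuple box | hamseq (interleave p)].

Definition rook_placement (A : {set box}) : bool :=
  [&& A \subset ferrersD, #|A| == n &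
      [forall x in A, forall y in A,
          (x != y) ==> (x.1 != y.1) && (x.2 != y.2)]].

Definition rookPlacements : {set {set box}} := [set A | rook_placement A].

Definition colfree (A : {set box}) (c : 'I_n) : bool :=
  [forall r : 'I_n, (r, c) \notin A].

(* column 1 (the smallest column); b_0 := 1 *)
Definition firstcol : option 'I_n := ohead (enum 'I_n).

Definition choosecol (A : {set box}) (p : 'I_n) : option 'I_n :=
  if colfree A p then Some p
  else ohead [seq c : 'I_n <- enum 'I_n | (p < c) && colfree A c].

(* prev = b_{i-1}; returns None if at some step the required column c
   does not exist (i.e. Phi is not defined). *)
Fixpoint phi_rec (prev : option 'I_n) (A B : {set box}) (s : seq box)
  : option ({set box} * {set box}) :=
  match s with
  | [::] => Some (A, B)
  | x :: s' =>
      match obind (choosecol A) prev with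
      | Some c => phi_rec (Some x.2) ((x.1, c) |: A) (x |: B) s'
      | None => None
      end
  end.

Definition Phi (p : seq box) : option ({set box} * {set box}) :=
  phi_rec firstcol set0 set0 p.

(* total version (the default value is irrelevant on hamPaths) *)
Definition PhiT (p : n.-tuple box) : {set box} * {set box} :=
  odflt (set0, set0) (Phi p).

End Ferrers.

From mathcomp Require Import all_boot all_order zify.
Set Implicit Arguments. Unset Strict Implicit. Unset Printing Implicit Defensive.

(* While Phi runs, let P be
   the set {b_1, ..., b_i} of columns of B and U the set of columns of A.  The
   greedy rule keeps  b_i |: U = m |: P  and  #|U| = #|P|, where m is the least
   column outside {b_1, ..., b_(i-1)}.  Hence the column c chosen at step i+1 is
   either b_i itself, which row a_(i+1) meets along the path, or the least column
   outside P, which is at most b_(i+1); since the rows of D are left-justified,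
   (a_(i+1), c) lies in D in both cases.  Conversely (A, B) determines the path:
   the greedy rule selects c, a_(i+1) is the row of the box of A in column c and
   b_(i+1) the column of the box of B in row a_(i+1).  Run on any pair of n-rook
   placements, this reconstruction yields a Hamiltonian path that Phi maps back
   to the pair. *)

Section GreedyColumn.
Variable n : nat.
Implicit Types (P U : {set 'I_n}) (A : {set box n}) (b c m p x : 'I_n).

Definition usedcols A : {set 'I_n} := [set y.2 | y in A].
Definition usedrows A : {set 'I_n} := [set y.1 | y in A].

Lemma usedcolsU1 A y : usedcols (y |: A) = y.2 |: usedcols A.
Proof. exact: imsetU1. Qed.

Lemma usedrowsU1 A y : usedrows (y |: A) = y.1 |: usedrows A.
Proof. exact: imsetU1. Qed.

Lemma usedcols0 : usedcols set0 = set0.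
Proof. exact: imset0. Qed.

Lemma usedrows0 : usedrows set0 = set0.
Proof. exact: imset0. Qed.

Lemma colfreeE A c : colfree A c = (c \notin usedcols A).
Proof.
apply/forallP/negP => [free /imsetP [y yA ey] | cA r].
  by have := free y.1; rewrite ey -surjective_pairing yA.
by apply/negP => rA; apply: cA; apply/imsetP; exists (r, c).
Qed.

Lemma notin_usedcols A y : y.2 \notin usedcols A -> y \notin A.
Proof. by apply: contra => /(imset_f (fun z : box n => z.2)). Qed.

Lemma notin_card_lt P b : b \notin P -> #|P| < n.
Proof.
move=> bP; have : P \proper setT by rewrite properT; apply: contraNneq bP => ->; rewrite inE.
by move/proper_card; rewrite cardsT card_ord.
Qed.

Definition is_mex P m := m \notin P /\ forall x, x < m -> x \in P.

Lemma mex_le P m b : is_mex P m -> b \notin P -> m <= b.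
Proof. by case=> _ below bP; rewrite leqNgt; apply: contra bP; apply: below. Qed.

Lemma exists_mex P : #|P| < n -> exists m, is_mex P m.
Proof.
move=> ltPn; have /subsetPn [x0 _ x0P] : ~~ ([set: 'I_n] \subset P).
  by apply: contraTN ltPn => /subset_leq_card; rewrite cardsT card_ord -leqNgt.
have [m mP minm] := @arg_minnP _ x0 [pred x | x \notin P] val x0P.
exists m; split=> // x ltxm; apply: contraTT ltxm => xP.
by rewrite -leqNgt; apply: minm.
Qed.

Lemma ohead_filter_ord (Q : pred 'I_n) c :
  Q c -> (forall x, x < c -> ~~ Q x) -> ohead [seq x <- enum 'I_n | Q x] = Some c.
Proof.
move=> Qc minc.
have sorted_vals : sorted ltn (map val [seq x <- enum 'I_n | Q x]).
  apply: (subseq_sorted ltn_trans (s2 := map val (enum 'I_n))).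
    exact/map_subseq/filter_subseq.
  by rewrite val_enum_ord iota_ltn_sorted.
have : c \in [seq x <- enum 'I_n | Q x] by rewrite mem_filter Qc mem_enum.
case: [seq x <- enum 'I_n | Q x] (filter_all Q (enum 'I_n)) sorted_vals
  => [//|h t] /= /andP [Qh _] sorted_vals.
rewrite inE => /predU1P [-> //| ct].
have /allP /(_ (val c) (map_f val ct)) ltnhc :=
  order_path_min ltn_trans sorted_vals.
by have := minc h ltnhc; rewrite Qh.
Qed.

Lemma choosecolP A p c : choosecol A p = Some c -> c \notin usedcols A /\ p <= c.
Proof.
rewrite /choosecol colfreeE; case: ifP => [pA [<-] // | _ headc].
have : c \in [seq x : 'I_n <- enum 'I_n | (p < x) && colfree A x].
  by move: headc; case: [seq _ <- _ | _] => //= h t [->]; rewrite mem_head.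
by rewrite mem_filter colfreeE => /andP [/andP [/ltnW pc cA] _].
Qed.

Definition greedy_inv p U P :=
  exists2 m, is_mex (P :\ p) m & #|U| = #|P| /\ p |: U = m |: P.

Lemma greedy_inv0 p : val p = 0 -> greedy_inv p set0 set0.
Proof.
move=> /= p0; exists p; last by rewrite !cards0.
by split=> [|x]; rewrite !inE ?andbF // p0.
Qed.

Lemma greedy_inv_step P U m c b : is_mex P m -> c \notin U -> c |: U = m |: P ->
  b \notin P -> greedy_inv b (c |: U) (b |: P).
Proof.
move=> [mP minm] cU eUP bP; exists m; first by rewrite setU1K.
split; last by rewrite eUP setUCA.
by have := congr1 (fun X : {set _} => #|X|) eUP; rewrite !cardsU1 cU mP bP => /addnI ->.
Qed.

Lemma greedy_inv_unused p U P : greedy_inv p U P -> p \notin U ->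
  exists2 m, is_mex P m & p |: U = m |: P.
Proof.
move=> [m [mQ minm] [cardUP eUP]] pU; exists m => //; split=> [|x /minm]; last first.
  by rewrite inE => /andP [].
apply/negP => mP; have := congr1 (fun X : {set _} => #|X|) eUP.
by rewrite !cardsU1 pU mP cardUP => /addIn.
Qed.

(* If the previous column is already used, the greedy invariant forces m = p. *)
Lemma greedy_inv_used p U P : greedy_inv p U P -> p \in U ->
  U = P /\ forall x, x <= p -> x \in P.
Proof.
move=> [m [mQ minm] [cardUP eUP]] pU.
have mP : m \in P.
  apply/negPn/negP => mP; have := congr1 (fun X : {set _} => #|X|) eUP.
  by rewrite !cardsU1 pU mP cardUP => /addIn.
have mp : m = p by apply/eqP; move: mQ; rewrite !inE mP andbT negbK.
subst m; have U1id (X : {set 'I_n}) : p \in X -> p |: X = X.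
  by move=> pX; apply/setUidPr; rewrite sub1set.
split=> [|x]; first by move: eUP; rewrite !U1id.
by rewrite leq_eqVlt => /predU1P [/val_inj -> // | /minm]; rewrite inE => /andP [].
Qed.

Lemma choosecol_greedy p P A : greedy_inv p (usedcols A) P -> #|P| < n ->
  exists2 c, choosecol A p = Some c &
    exists2 m, is_mex P m & c |: usedcols A = m |: P /\ (c = p \/ c = m).
Proof.
move=> inv ltPn; have [pU | pU] := boolP (p \in usedcols A); last first.
  have [m mexP eUP] := greedy_inv_unused inv pU.
  exists p; first by rewrite /choosecol colfreeE pU.
  by exists m => //; split; [rewrite eUP | left].
have [UP leP] := greedy_inv_used inv pU.
have [m mexP] := exists_mex ltPn; have [mP minm] := mexP.
have pm : p < m by rewrite ltnNge; apply: contra mP; apply: leP.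
exists m; last by exists m => //; split; [rewrite UP | right].
rewrite /choosecol colfreeE pU; apply: ohead_filter_ord.
  by rewrite colfreeE UP mP pm.
by move=> x /minm xP; rewrite colfreeE UP xP andbF.
Qed.

End GreedyColumn.

Section RookPlacements.
Variable n : nat.
Implicit Types (A B : {set box n}) (x y : box n) (a c : 'I_n).

Definition nonattacking A :=
  [forall x in A, forall y in A, (x != y) ==> (x.1 != y.1) && (x.2 != y.2)].

Lemma nonattacking_row A x y : nonattacking A -> x \in A -> y \in A -> x.1 = y.1 -> x = y.
Proof.
move=> /forall_inP /(_ x) rookA xA yA e; have /forall_inP /(_ y yA) := rookA xA.
by rewrite e eqxx /=; case: eqP.
Qed.

Lemma nonattacking_col A x y : nonattacking A -> x \in A -> y \in A -> x.2 = y.2 -> x = y.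
Proof.
move=> /forall_inP /(_ x) rookA xA yA e; have /forall_inP /(_ y yA) := rookA xA.
by rewrite e eqxx /= andbF; case: eqP.
Qed.

Lemma nonattacking0 : nonattacking set0.
Proof. by apply/forall_inP => x; rewrite inE. Qed.

Lemma nonattackingU1 A x : nonattacking A ->
  x.1 \notin usedrows A -> x.2 \notin usedcols A -> nonattacking (x |: A).
Proof.
move=> rookA xr xc.
have fresh y : y \in A -> (x.1 != y.1) && (x.2 != y.2).
  move=> yA; apply/andP; split.
    by apply: contraNneq xr => ->; apply: imset_f.
  by apply: contraNneq xc => ->; apply: imset_f.
apply/forall_inP => y /setU1P [-> | yA]; apply/forall_inP => z /setU1P [-> | zA];
  apply/implyP => neq.
- by rewrite eqxx in neq.
- exact: fresh.
- by rewrite eq_sym [y.2 == _]eq_sym fresh.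
- by move/forall_inP: rookA => /(_ y yA) /forall_inP /(_ z zA) /implyP; apply.
Qed.

Lemma card_usedcols A : nonattacking A -> #|usedcols A| = #|A|.
Proof. by move=> rookA; apply: card_in_imset => x y; apply: nonattacking_col. Qed.

Lemma card_usedrows A : nonattacking A -> #|usedrows A| = #|A|.
Proof. by move=> rookA; apply: card_in_imset => x y; apply: nonattacking_row. Qed.

Lemma usedrows_subset A0 A x : nonattacking A0 -> A \subset A0 -> x \in A0 ->
  (x.1 \in usedrows A) = (x.2 \in usedcols A).
Proof.
move=> rookA0 /subsetP sAA0 xA0.
apply/imsetP/imsetP => -[y yA e]; exists y => //.
  by rewrite (nonattacking_row rookA0 xA0 (sAA0 y yA) e).
by rewrite (nonattacking_col rookA0 xA0 (sAA0 y yA) e).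
Qed.

(* Junk value [c] (resp. [a]) when the column (resp. row) has no box. *)
Definition row_of A c : 'I_n := odflt c [pick r | (r, c) \in A].
Definition col_of B a : 'I_n := odflt a [pick j | (a, j) \in B].

Lemma row_of_eq A r c : nonattacking A -> (r, c) \in A -> row_of A c = r.
Proof.
move=> rookA rcA; rewrite /row_of; case: pickP => [r' /= r'cA | /(_ r)]; last by rewrite rcA.
by have [] := nonattacking_col rookA r'cA rcA erefl.
Qed.

Lemma col_of_eq B a j : nonattacking B -> (a, j) \in B -> col_of B a = j.
Proof.
move=> rookB ajB; rewrite /col_of; case: pickP => [j' /= aj'B | /(_ j)]; last by rewrite ajB.
by have [] := nonattacking_row rookB aj'B ajB erefl.
Qed.

Lemma row_of_full A c : nonattacking A -> #|A| = n -> (row_of A c, c) \in A.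
Proof.
move=> rookA cardA; have : c \in usedcols A.
  suff -> : usedcols A = setT by rewrite inE.
  by apply/eqP; rewrite eqEcard subsetT cardsT card_ord (card_usedcols rookA) cardA /=.
by case/imsetP => -[r c'] rcA /= ->; rewrite (row_of_eq rookA rcA).
Qed.

Lemma col_of_full B a : nonattacking B -> #|B| = n -> (a, col_of B a) \in B.
Proof.
move=> rookB cardB; have : a \in usedrows B.
  suff -> : usedrows B = setT by rewrite inE.
  by apply/eqP; rewrite eqEcard subsetT cardsT card_ord (card_usedrows rookB) cardB /=.
by case/imsetP => -[a' j] ajB /= ->; rewrite (col_of_eq rookB ajB).
Qed.

End RookPlacements.

Section PhiPsi.
Variable n : nat.
Implicit Types (A B : {set box n}) (s : seq (box n)).

Fixpoint psi_rec A0 B0 k (prev : option 'I_n) A : seq (box n) :=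
  if k is k'.+1 then
    if obind (choosecol A) prev is Some c then
      let a := row_of A0 c in let b := col_of B0 a in
      (a, b) :: psi_rec A0 B0 k' (Some b) ((a, c) |: A)
    else [::]
  else [::].

Lemma phi_rec_subset prev A B s Af Bf :
  phi_rec prev A B s = Some (Af, Bf) -> A \subset Af /\ B \subset Bf.
Proof.
elim: s prev A B => [|x s IH] prev A B /=; first by case=> -> ->.
case: prev => [p|//] /=; case: (choosecol A p) => [c|//] /IH [sAf sBf].
by split; [apply: subset_trans sAf | apply: subset_trans sBf]; apply: subsetUr.
Qed.

Lemma phi_rec_card prev A B s Af Bf :
  phi_rec prev A B s = Some (Af, Bf) -> #|Af| = #|A| + size s.
Proof.
elim: s prev A B => [|x s IH] prev A B /=; first by case=> <- _; rewrite addn0.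
case: prev => [p|//] /=; case ch: (choosecol A p) => [c|//] /IH ->.
have [cA _] := choosecolP ch.
by rewrite cardsU1 (@notin_usedcols _ A (x.1, c)) // add1n addSnnS.
Qed.

Lemma psi_rec_phi_rec prev A B s Af Bf : phi_rec prev A B s = Some (Af, Bf) ->
  nonattacking Af -> nonattacking Bf -> psi_rec Af Bf (size s) prev A = s.
Proof.
elim: s prev A B => [|[a b] s IH] [p|] A B //=.
case: (choosecol A p) => [c|//] run rookAf rookBf.
have [/subsetP sAf /subsetP sBf] := phi_rec_subset run.
rewrite (row_of_eq rookAf (sAf _ (setU11 _ _))) (col_of_eq rookBf (sBf _ (setU11 _ _))).
by rewrite (IH _ _ _ run).
Qed.

Lemma phi_rec_psi_rec A0 B0 k prev A B :
  (forall c, (row_of A0 c, c) \in A0) -> (forall a, (a, col_of B0 a) \in B0) ->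
  exists Af Bf, [/\ phi_rec prev A B (psi_rec A0 B0 k prev A) = Some (Af, Bf),
                    Af \subset A :|: A0 & Bf \subset B :|: B0].
Proof.
move=> fullA0 fullB0; elim: k prev A B => [|k IH] prev A B /=.
  by exists A, B; rewrite !subsetUl.
case: prev => [p|] /=; last by exists A, B; rewrite !subsetUl.
case ch: (choosecol A p) => [c|] /=; last by exists A, B; rewrite !subsetUl.
set a := row_of A0 c; set b := col_of B0 a.
have [Af [Bf [run sAf sBf]]] := IH (Some b) ((a, c) |: A) ((a, b) |: B).
exists Af, Bf; rewrite ch; split=> //.
  by apply: (subset_trans sAf); rewrite -setUA subUset sub1set in_setU fullA0 orbT /=.
by apply: (subset_trans sBf); rewrite -setUA subUset sub1set in_setU fullB0 orbT /=.
Qed.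

End PhiPsi.

Section GreedyRuns.
Variables (n : nat) (lam : 'I_n -> nat).
Implicit Types (A B : {set box n}) (s : seq (box n)).
Local Notation D := (ferrersD lam).

Record run_inv (p : 'I_n) A B : Prop := RunInv {
  run_greedy : greedy_inv p (usedcols A) (usedcols B);
  run_rookA : nonattacking A;
  run_rookB : nonattacking B;
  run_subA : A \subset D;
  run_subB : B \subset D;
  run_rows : usedrows A = usedrows B }.

Lemma run_inv0 p : val p = 0 -> run_inv p set0 set0.
Proof.
by move=> p0; split; rewrite ?sub0set ?usedcols0 //; [apply: greedy_inv0 | apply: nonattacking0 ..].
Qed.

Lemma run_inv_card p A B : run_inv p A B -> #|A| = #|B|.
Proof.
by case=> -[m _ [cardAB _]] rookA rookB _ _ _; rewrite -!card_usedcols.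
Qed.

Lemma run_inv_rook_placement p A B : run_inv p A B -> #|A| = n ->
  rook_placement lam A /\ rook_placement lam B.
Proof.
move=> inv cardA; have cardB := run_inv_card inv; rewrite cardA in cardB.
by case: inv => _ rookA rookB sA sB _; rewrite /rook_placement cardA -cardB sA sB eqxx.
Qed.

Lemma rook_nonattacking A : rook_placement lam A -> nonattacking A.
Proof. by case/and3P. Qed.

Lemma rook_card A : rook_placement lam A -> #|A| = n.
Proof. by case/and3P => _ /eqP. Qed.

Lemma rook_placement_subset A B :
  rook_placement lam A -> rook_placement lam B -> A \subset B -> A = B.
Proof.
move=> rA rB sAB.
by apply/eqP; rewrite eqEcard sAB (rook_card rA) (rook_card rB) /=.
Qed.

Lemma choosecol_in_row p A B a b c : run_inv p A B -> choosecol A p = Some c ->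
  b \notin usedcols B -> (a, p) \in D -> (a, b) \in D -> (a, c) \in D.
Proof.
move=> inv ch bB; rewrite !inE /= => pa ba.
have [c' ch' [m mexB [_ c'pm]]] := choosecol_greedy (run_greedy inv) (notin_card_lt bB).
rewrite ch in ch'; case: ch' => ?; subst c'.
by case: c'pm => ->; last exact: leq_ltn_trans (mex_le mexB bB) ba.
Qed.

Lemma run_inv_step p A B a b c : run_inv p A B -> choosecol A p = Some c ->
  a \notin usedrows A -> b \notin usedcols B -> (a, b) \in D -> (a, c) \in D ->
  run_inv b ((a, c) |: A) ((a, b) |: B).
Proof.
case=> greedy rookA rookB sA sB rowsAB ch aA bB abD acD.
have [c' ch' [m mexB [eU _]]] := choosecol_greedy greedy (notin_card_lt bB).
rewrite ch in ch'; case: ch' => ?; subst c'.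
have [cA _] := choosecolP ch.
split; rewrite ?usedcolsU1 ?usedrowsU1 ?subUset ?sub1set ?acD ?abD ?rowsAB //.
- exact: greedy_inv_step mexB cA eU bB.
- exact: nonattackingU1.
- by apply: nonattackingU1; rewrite // -rowsAB.
Qed.

(* [s] read as a_1 b_1 a_2 b_2 ... continues a path of the Ferrers graph that
   arrived at column [p], avoiding the rows [R] and the columns [C]. *)
Fixpoint fresh_path (p : 'I_n) (R C : {set 'I_n}) s : bool :=
  if s is x :: s' then
    [&& (x.1, p) \in D, x \in D, x.1 \notin R, x.2 \notin C &
        fresh_path x.2 (x.1 |: R) (x.2 |: C) s']
  else true.

Lemma phi_run s p A B : run_inv p A B -> fresh_path p (usedrows A) (usedcols B) s ->
  exists q Af Bf, phi_rec (Some p) A B s = Some (Af, Bf) /\ run_inv q Af Bf.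
Proof.
elim: s p A B => [|[a b] s IH] p A B inv /=; first by exists p, A, B.
case/and5P => apD abD aA bB fresh.
have [c ch _] := choosecol_greedy (run_greedy inv) (notin_card_lt bB).
have inv' := run_inv_step inv ch aA bB abD (choosecol_in_row inv ch bB apD abD).
move: fresh; rewrite -(usedrowsU1 A (a, c)) -(usedcolsU1 B (a, b)).
case/(IH _ _ _ inv') => q [Af [Bf [run invf]]].
by exists q, Af, Bf; rewrite ch.
Qed.

Lemma psi_run A0 B0 k p A B : rook_placement lam A0 -> rook_placement lam B0 ->
  run_inv p A B -> A \subset A0 -> B \subset B0 -> #|A| + k = n ->
  size (psi_rec A0 B0 k (Some p) A) = k /\
  fresh_path p (usedrows A) (usedcols B) (psi_rec A0 B0 k (Some p) A).
Proof.
move=> /and3P [A0D /eqP cardA0 rookA0] /and3P [B0D /eqP cardB0 rookB0].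
elim: k p A B => [|k IH] p A B inv sA sB cardA //=.
have ltBn : #|usedcols B| < n.
  by rewrite card_usedcols ?(run_rookB inv) // -(run_inv_card inv); lia.
have [c ch _] := choosecol_greedy (run_greedy inv) ltBn; rewrite ch /=.
set a := row_of A0 c; set b := col_of B0 a.
have acA0 : (a, c) \in A0 := row_of_full c rookA0 cardA0.
have abB0 : (a, b) \in B0 := col_of_full a rookB0 cardB0.
have [cA pc] := choosecolP ch.
have aA : a \notin usedrows A by rewrite (usedrows_subset rookA0 sA acA0).
have bB : b \notin usedcols B.
  by rewrite -(usedrows_subset rookB0 sB abB0) -(run_rows inv).
have acD := subsetP A0D _ acA0; have abD := subsetP B0D _ abB0.
have apD : (a, p) \in D by move: acD; rewrite !inE; apply: leq_ltn_trans.
have sA' : (a, c) |: A \subset A0 by rewrite subUset sub1set acA0.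
have sB' : (a, b) |: B \subset B0 by rewrite subUset sub1set abB0.
have cardA' : #|(a, c) |: A| + k = n.
  by rewrite cardsU1 (@notin_usedcols _ _ (a, c)) // add1n addSnnS.
have [-> fresh] := IH _ _ _ (run_inv_step inv ch aA bB abD acD) sA' sB' cardA'.
by rewrite usedrowsU1 usedcolsU1 in fresh; rewrite apD abD aA bB.
Qed.

End GreedyRuns.

Section HamiltonianPaths.
Variables (n : nat) (lam : 'I_n -> nat).
Implicit Types (s : seq (box n)) (w : seq (vertex n)) (R C : {set 'I_n}).
Local Notation D := (ferrersD lam).

Lemma size_interleave s : size (interleave s) = size s + size s.
Proof. by elim: s => //= x s ->; rewrite addnS. Qed.

Lemma mem_interleave_row s a : (inl a \in interleave s) = (a \in map fst s).
Proof. by elim: s => //= x s IH; rewrite !inE IH. Qed.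

Lemma mem_interleave_col s b : (inr b \in interleave s) = (b \in map snd s).
Proof. by elim: s => //= x s IH; rewrite !inE IH. Qed.

Lemma uniq_interleave s : uniq (interleave s) = uniq (map fst s) && uniq (map snd s).
Proof.
elim: s => //= x s IH; rewrite !inE mem_interleave_row mem_interleave_col IH /=.
by rewrite -!andbA; do !bool_congr.
Qed.

Lemma all_notin_setU1 R a (l : seq 'I_n) :
  all (fun x => x \notin a |: R) l = (a \notin l) && all (fun x => x \notin R) l.
Proof.
by elim: l => //= x l ->; rewrite in_setU1 inE !negb_or eq_sym -!andbA; do !bool_congr.
Qed.

Lemma fresh_pathE p R C s : fresh_path lam p R C s =
  [&& path (fadj lam) (inr p) (interleave s), uniq (map fst s), uniq (map snd s),
      all (fun a => a \notin R) (map fst s) & all (fun b => b \notin C) (map snd s)].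
Proof.
elim: s p R C => [|[a b] s IH] p R C //=.
by rewrite IH !all_notin_setU1 -!andbA; do !bool_congr.
Qed.

Lemma hamseq_interleave p s : val p = 0 -> size s = n ->
  hamseq lam (interleave s) = fresh_path lam p set0 set0 s.
Proof.
move=> /= p0 sz.
have all0 (l : seq 'I_n) : all (fun x => x \notin set0) l by apply/allP => x _; rewrite inE.
rewrite /hamseq fresh_pathE !all0 size_interleave sz card_sum card_ord eqxx uniq_interleave /=.
case: s sz => [|[a b] s] _ //=; rewrite andbT.
have [abD | abD] := boolP ((a, b) \in D); last by rewrite !andbF.
have -> : (a, p) \in D by move: abD; rewrite !inE /= p0; apply: leq_ltn_trans.
by rewrite -!andbA; do !bool_congr.
Qed.

Lemma fadj_is_row (u v : vertex n) : fadj lam u v -> is_row v = ~~ is_row u.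
Proof. by case: u v => [a|b] [c|d]. Qed.

Lemma path_is_row (u : vertex n) t : path (fadj lam) u t ->
  is_row (last u t) = is_row u (+) odd (size t).
Proof.
elim: t u => [|v t IH] u /=; first by rewrite addbF.
by case/andP => /fadj_is_row uv /IH ->; rewrite uv; case: (is_row u); case: (odd _).
Qed.

Lemma hamseq_ends w : 0 < n -> hamseq lam w ->
  if w is u :: t then is_row u != is_row (last u t) else false.
Proof.
move=> n_gt0 /and3P [/eqP]; rewrite card_sum card_ord.
case: w => [|u t] /= sz _; first by exfalso; lia.
move/path_is_row => ->; have : ~~ odd (size t).+1 by rewrite sz addnn odd_double.
by rewrite /= negbK => ->; case: (is_row u).
Qed.

Fixpoint unzip_path w : seq (box n) :=
  if w is inl a :: inr b :: t then (a, b) :: unzip_path t else [::].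

Lemma unzip_pathK k w : size w = k + k ->
  (if w is u :: t then is_row u && path (fadj lam) u t else true) ->
  interleave (unzip_path w) = w.
Proof.
elim: k w => [|k IH] [|u [|v t]] //=; rewrite ?addnS ?addSn //.
case=> sz; case: u => // a; case: v => // b /= /andP [_ vt].
congr [:: _, _ & _]; apply: IH => //.
by case: t {sz} vt => // -[c|d] t //= /andP [_ ->].
Qed.

Lemma hamseq_interleaved w : hamseq lam w ->
  (if w is u :: _ then is_row u else false) ->
  exists p : n.-tuple (box n), w = interleave p.
Proof.
case/and3P => /eqP; rewrite card_sum card_ord => sz _ st su.
have w_il : interleave (unzip_path w) = w.
  by apply: (unzip_pathK sz); case: w sz st su => //= u t _ -> ->.
have sz_unzip : size (unzip_path w) == n.
  by move: sz; rewrite -{1}w_il size_interleave => sz; apply/eqP; lia.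
by exists (Tuple sz_unzip).
Qed.

End HamiltonianPaths.

Section Bijection.
Variables (n : nat) (lam : 'I_n -> nat).
Hypothesis n_gt0 : 0 < n.

Lemma firstcol0 : exists2 j, firstcol n = Some j & val j = 0.
Proof.
rewrite /firstcol; have := val_enum_ord n.
case: (enum 'I_n) => [|j t] /=.
  by move/(congr1 size); rewrite size_iota => n0; move: n_gt0; rewrite -n0.
by move/(congr1 (head 0)) => /= j0; exists j => //; rewrite j0; case: (n).
Qed.

Lemma Phi_hamPaths p : p \in hamPaths lam ->
  exists A B, [/\ Phi p = Some (A, B), rook_placement lam A & rook_placement lam B].
Proof.
have [j0 fc j00] := firstcol0.
rewrite inE (hamseq_interleave lam j00 (size_tuple p)) => fresh.
have := phi_run (s := p) (run_inv0 lam j00); rewrite usedrows0 usedcols0.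
case/(_ fresh) => q [A [B [run inv]]].
have cardA : #|A| = n by rewrite (phi_rec_card run) cards0 size_tuple.
have [rookA rookB] := run_inv_rook_placement inv cardA.
by exists A, B; rewrite /Phi fc.
Qed.

Lemma PhiT_inj : {in hamPaths lam &, injective (@PhiT n)}.
Proof.
move=> p q /Phi_hamPaths [A [B [eP /rook_nonattacking rookA /rook_nonattacking rookB]]].
case/Phi_hamPaths => A' [B' [eQ _ _]]; rewrite /PhiT eP eQ => -[eA eB].
rewrite -eA -eB in eQ; apply: val_inj => /=.
by rewrite -(psi_rec_phi_rec eP rookA rookB) -(psi_rec_phi_rec eQ rookA rookB) !size_tuple.
Qed.

Lemma PhiT_image :
  @PhiT n @: hamPaths lam = setX (rookPlacements lam) (rookPlacements lam).
Proof.
apply/setP => -[A0 B0]; rewrite !inE; apply/imsetP/andP => [[p hp ->] | [/= rA0 rB0]].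
  by have [A [B [eP rA rB]]] := Phi_hamPaths hp; rewrite /PhiT eP.
have [j0 fc j00] := firstcol0.
have card0n : #|(set0 : {set box n})| + n = n by rewrite cards0.
have [sz fresh] := psi_run rA0 rB0 (run_inv0 lam j00) (sub0set _) (sub0set _) card0n.
set s := psi_rec A0 B0 n (Some j0) set0 in sz fresh.
have /eqP sz' := sz; pose p := Tuple sz'.
have hp : p \in hamPaths lam.
  by rewrite inE (hamseq_interleave lam j00 sz); move: fresh; rewrite usedrows0 usedcols0.
exists p => //; have [A [B [eP rA rB]]] := Phi_hamPaths hp; rewrite /PhiT eP /=.
have fullA0 c := row_of_full c (rook_nonattacking rA0) (rook_card rA0).
have fullB0 a := col_of_full a (rook_nonattacking rB0) (rook_card rB0).
have [A' [B' [eP' sA sB]]] := phi_rec_psi_rec n (Some j0) set0 set0 fullA0 fullB0.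
move: eP; rewrite /Phi fc eP' => -[eA eB]; rewrite eA eB !set0U in sA sB.
by rewrite (rook_placement_subset rA rA0 sA) (rook_placement_subset rB rB0 sB).
Qed.

End Bijection.

Theorem mainTheorem2 (n : nat) (lam : 'I_n -> nat)
  (Hn : 0 < n)
  (Hfirst : forall i : 'I_n, val i = 0 -> lam i = n)
  (Hmono : forall i j : 'I_n, i <= j -> lam j <= lam i)
  (Hpos : forall i : 'I_n, 1 <= lam i) :
  (* every Hamiltonian path has one row end and one column end *)
  (forall s : seq (vertex n), hamseq lam s ->
     if s is x :: t then is_row x != is_row (last x t) else false) /\
  (* read from its row end, it has the form a_1, b_1, ..., a_n, b_n *)
  (forall s : seq (vertex n), hamseq lam s ->
     (if s is x :: _ then is_row x else false) ->
     exists p : n.-tuple (box n), s = interleave p) /\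
  (* Phi is well defined on Hamiltonian paths *)
  (forall p, p \in hamPaths lam -> Phi p != None) /\
  (* Phi is a bijection onto pairs of n-rook placements *)
  {in hamPaths lam &, injective (@PhiT n)} /\
  (@PhiT n) @: hamPaths lam = setX (rookPlacements lam) (rookPlacements lam) /\
  (* consequence *)
  #|hamPaths lam| = #|rookPlacements lam| ^ 2.
Proof.
have inj : {in hamPaths lam &, injective (@PhiT n)} := PhiT_inj Hn.
have img := PhiT_image lam Hn.
split; first by move=> w; apply: hamseq_ends.
split; first exact: hamseq_interleaved.
split; first by move=> p /(Phi_hamPaths Hn) [A [B [-> _ _]]].
do 2 (split => //).
by rewrite -(card_in_imset inj) img cardsX mulnn.
Qed.
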